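(* For every MTL sentence $\phi$ (whose atomic propositions are taken to be nullary fluent predicates): $\models_{\mathrm{MTL}}\phi$ iff $\models_{\text{t-ESG}}\phi$.
   Context: The logic t-ESG (relevant fragment). Action standard names $\mathcal N_A$ (countably infinite); fluent predicate symbols including nullary ones. Timed traces are finite or infinite sequences $t_1p_1t_2p_2\cdots$ with non-decreasing $t_i\in\mathbb R_{\ge0}$ and $p_i\in\mathcal N_A$; $\mathcal T$ denotes the set of all timed traces; $(p_1,t_1)\cdots(p_k,t_k)$ denotes $t_1p_1\cdots t_kp_k$; $\mathrm{time}(z)=t_k$ for such $z$, $\mathrm{time}(\langle\rangle)=0$. A t-ESG world $w$ assigns in particular to each primitive formula $F(\vec n)$ and each finite trace $z$ a truth value $w[F(\vec n),z]\in\{0,1\}$ (it also assigns values to terms and clocks subject to rigidity, unique-names and clock-progression constraints that impose no restriction on the truth values of fluent predicates). Trace formulas: atoms $F$ (nullary fluents), $\neg$, $\wedge$, and $\phi\,\mathcal U_I\,\psi$ with $I$ an open/closed/half-closed interval with natural-number (or $\infty$) endpoints. Truth: $w,z,\tau\models F$ iff $w[F,z]=1$; Boolean connectives usual; $w,z,\tau\models\phi\,\mathcal U_I\,\psi$ iff there are $\tau'\in\mathcal T$ and nonempty finite $z_1=(p_1,t_1)\cdots(p_k,t_k)$ with $\tau=z_1\tau'$, $w,zz_1,\tau'\models\psi$, $\mathrm{time}(z_1)\in\mathrm{time}(z)+I$, and $w,zz_2,z_3\tau'\models\phi$ for all splits $z_1=z_2z_3$ into nonempty time–action sequences. $\models_{\text{t-ESG}}\phi$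 means $w,\langle\rangle,\tau\models\phi$ for every world $w$ and every $\tau\in\mathcal T$. MTL (pointwise semantics): formulas over propositions $P$: $p$, $\neg\phi$, $\phi\wedge\psi$, $\phi\,\mathcal U_I\,\psi$. A timed word is a finite or infinite sequence $\rho=(\rho_0,t_0)(\rho_1,t_1)\cdots$, $\rho_i\subseteq P$, $t_0=0$, non-decreasing $t_i\in\mathbb R_{\ge0}$. $\rho,i\models p$ iff $p\in\rho_i$; Boolean connectives usual; $\rho,i\models\phi\,\mathcal U_I\,\psi$ iff there is $j$ with $i<j<|\rho|$, $\rho,j\models\psi$, $t_j-t_i\in I$, and $\rho,m\models\phi$ for all $i<m<j$. $\models_{\mathrm{MTL}}\phi$ means $\rho,0\models\phi$ for every timed word $\rho$. *)

From Stdlib Require Import Reals List.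
Open Scope R_scope.
Set Implicit Arguments.

(** Intervals with natural-number endpoints; [hi = None] means +infinity
    (then [hi_closed] is ignored, the upper bound being open). *)
Record interval := mkInterval {
  lo : nat; lo_closed : bool; hi : option nat; hi_closed : bool }.

Definition in_interval (I : interval) (d : R) : Prop :=
  (if lo_closed I then INR (lo I) <= d else INR (lo I) < d) /\
  match hi I with
  | None => True
  | Some h => if hi_closed I then d <= INR h else d < INR h
  end.

Inductive formula (P : Type) : Type :=
| Atom : P -> formula P
| Neg : formula P -> formula P
| And : formula P -> formula P -> formula P
| Until : interval -> formula P -> formula P -> formula P.
Arguments Atom {P}. Arguments Neg {P}. Arguments And {P}. Arguments Until {P}.

(** A timed word: length ([None] = infinite), letters rho_i (subsets of P),
    timestamps t_i. *)
Record tword (P : Type) := mkTword {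
  wlen : option nat; wlet : nat -> P -> Prop; wtime : nat -> R }.

Definition win (P : Type) (rho : tword P) (i : nat) : Prop :=
  match wlen rho with None => True | Some n => (i < n)%nat end.

Definition valid_word (P : Type) (rho : tword P) : Prop :=
  win rho 0 /\ wtime rho 0 = 0 /\
  (forall i j, (i <= j)%nat -> win rho j -> wtime rho i <= wtime rho j).

Fixpoint mtl_sat (P : Type) (rho : tword P) (phi : formula P) (i : nat) : Prop :=
  match phi with
  | Atom p => wlet rho i p
  | Neg f => ~ mtl_sat rho f i
  | And f g => mtl_sat rho f i /\ mtl_sat rho g i
  | Until J f g =>
      exists j, (i < j)%nat /\ win rho j /\ mtl_sat rho g j /\
        in_interval J (wtime rho j - wtime rho i) /\
        (forall m, (i < m)%nat -> (m < j)%nat -> mtl_sat rho f m)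
  end.

Definition mtl_valid (P : Type) (phi : formula P) : Prop :=
  forall rho : tword P, valid_word rho -> mtl_sat rho phi 0.

(** Action standard names N_A: a countably infinite set, here nat. *)
Definition action := nat.

Definition ftrace := list (action * R).
Definition ftime (z : ftrace) : R := last (map snd z) 0.

(** Finite or infinite timed traces: length ([None] = infinite) and entries. *)
Record trace := mkTrace { tlen : option nat; tat : nat -> action * R }.

Definition tin (tau : trace) (i : nat) : Prop :=
  match tlen tau with None => True | Some n => (i < n)%nat end.

Definition valid_trace (tau : trace) : Prop :=
  (forall i, tin tau i -> 0 <= snd (tat tau i)) /\
  (forall i j, (i <= j)%nat -> tin tau j -> snd (tat tau i) <= snd (tat tau j)).

(** tau = (ttake k tau) (tdrop k tau), for k <= length of tau. *)
Definition ttake (k : nat) (tau : trace) : ftrace := map (tat tau) (seq 0 k).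
Definition tdrop (k : nat) (tau : trace) : trace :=
  mkTrace (option_map (fun n => (n - k)%nat) (tlen tau)) (fun i => tat tau (k + i)).

(** The part of a t-ESG world relevant here: truth values w[F,z] of the
    nullary fluents F on finite traces z (unconstrained by the world axioms). *)
Definition world (P : Type) := P -> ftrace -> bool.

Fixpoint tesg_sat (P : Type) (w : world P) (phi : formula P)
    (z : ftrace) (tau : trace) : Prop :=
  match phi with
  | Atom F => w F z = true
  | Neg f => ~ tesg_sat w f z tau
  | And f g => tesg_sat w f z tau /\ tesg_sat w g z tau
  | Until J f g =>
      (* z1 = ttake k tau nonempty, tau' = tdrop k tau *)
      exists k, (1 <= k)%nat /\ tin tau (k - 1) /\
        tesg_sat w g (z ++ ttake k tau) (tdrop k tau) /\
        in_interval J (ftime (ttake k tau) - ftime z) /\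
        (* splits z1 = z2 z3 into nonempty z2 = ttake j tau, z3 *)
        (forall j, (1 <= j)%nat -> (j < k)%nat ->
           tesg_sat w f (z ++ ttake j tau) (tdrop j tau))
  end.

Definition tesg_valid (P : Type) (phi : formula P) : Prop :=
  forall (w : world P) (tau : trace), valid_trace tau -> tesg_sat w phi nil tau.

(* Position i of a timed word corresponds to the history consisting of the first
   i events of a trace: the letter at i is the set of fluents true after that
   history, and the timestamp at i is its time (so position 0 is the empty
   history at time 0, matching t_0 = 0).  Under this correspondence the two
   until-operators quantify over the same future positions, so MTL truth at i
   and t-ESG truth after the i-th event coincide by induction on formulas.
   Every valid trace together with a world induces a corresponding valid word,
   and every valid word induces a corresponding valid trace (with arbitrary
   action names) and world (reading the letter at the length of the history);
   hence the two notions of validity agree. *)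
From Stdlib Require Import Reals List Lia Lra FunctionalExtensionality ClassicalEpsilon.
Open Scope R_scope.
Set Implicit Arguments.

Lemma ftime_ttakeS (tau : trace) (i : nat) :
  ftime (ttake (S i) tau) = snd (tat tau i).
Proof.
  unfold ftime, ttake. rewrite seq_S, !map_app. apply last_last.
Qed.

Lemma map_seq_shift (A : Type) (f : nat -> A) (m s k : nat) :
  map (fun i => f (m + i)%nat) (seq s k) = map f (seq (m + s) k).
Proof.
  revert s; induction k as [|k IH]; intros s; simpl; [reflexivity |].
  rewrite IH. do 3 f_equal. lia.
Qed.

Lemma ttake_tdrop_app (tau : trace) (m k : nat) :
  ttake m tau ++ ttake k (tdrop m tau) = ttake (m + k) tau.
Proof.
  unfold ttake, tdrop; simpl. rewrite seq_app, map_app. f_equal.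
  rewrite map_seq_shift. now rewrite Nat.add_0_r.
Qed.

Lemma ftime_ttake_tdrop (tau : trace) (m k : nat) : (1 <= k)%nat ->
  ftime (ttake k (tdrop m tau)) = ftime (ttake (m + k) tau).
Proof.
  intros Hk. replace k with (S (k - 1)) by lia.
  replace (m + S (k - 1))%nat with (S (m + (k - 1))) by lia.
  now rewrite !ftime_ttakeS.
Qed.

Lemma tdrop_tdrop (tau : trace) (m k : nat) :
  tdrop k (tdrop m tau) = tdrop (m + k) tau.
Proof.
  destruct tau as [l f]; unfold tdrop; simpl. f_equal.
  - destruct l; simpl; f_equal; lia.
  - apply functional_extensionality; intro i; f_equal; lia.
Qed.

Lemma tdrop0 (tau : trace) : tdrop 0 tau = tau.
Proof.
  destruct tau as [[n|] f]; unfold tdrop; simpl; repeat f_equal; lia.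
Qed.

Lemma win_le {P : Type} {rho : tword P} (a b : nat) :
  win rho a -> (b <= a)%nat -> win rho b.
Proof. unfold win; destruct (wlen rho); auto; lia. Qed.

Record simulation (P : Type) (rho : tword P) (w : world P) (tau : trace) := {
  sim_len : wlen rho = option_map S (tlen tau);
  sim_let : forall i p, win rho i -> (wlet rho i p <-> w p (ttake i tau) = true);
  sim_time : forall i, win rho i -> wtime rho i = ftime (ttake i tau) }.

Section Simulation.
Variables (P : Type) (rho : tword P) (w : world P) (tau : trace).
Hypothesis Hsim : simulation rho w tau.

Lemma win_iff_tin_tdrop (m k : nat) : (1 <= k)%nat ->
  win rho (m + k) <-> tin (tdrop m tau) (k - 1).
Proof.
  intros Hk. unfold win, tin, tdrop; rewrite (sim_len Hsim); simpl.
  destruct (tlen tau); simpl; [lia | tauto].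
Qed.

Lemma wtime_sub_ftime (m k : nat) : (1 <= k)%nat -> win rho m -> win rho (m + k) ->
  wtime rho (m + k) - wtime rho m = ftime (ttake k (tdrop m tau)) - ftime (ttake m tau).
Proof.
  intros Hk Hm Hmk. rewrite !(sim_time Hsim) by assumption.
  now rewrite ftime_ttake_tdrop.
Qed.

Lemma mtl_sat_iff_tesg_sat (phi : formula P) (m : nat) : win rho m ->
  mtl_sat rho phi m <-> tesg_sat w phi (ttake m tau) (tdrop m tau).
Proof.
  revert m.
  induction phi as [p | f IH | f IHf g IHg | J f IHf g IHg]; intros m Hm; simpl.
  - now apply (sim_let Hsim).
  - rewrite IH by assumption; tauto.
  - rewrite IHf, IHg by assumption; tauto.
  - setoid_rewrite ttake_tdrop_app. setoid_rewrite tdrop_tdrop. split.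
    + intros (j & Hmj & Hj & Hg & HJ & Hf).
      exists (j - m)%nat.
      replace j with (m + (j - m))%nat in Hj, Hg, HJ, Hf by lia.
      assert (Hk : (1 <= j - m)%nat) by lia.
      rewrite <- win_iff_tin_tdrop, <- IHg, <- wtime_sub_ftime by assumption.
      refine (conj Hk (conj Hj (conj Hg (conj HJ _)))).
      intros i Hi Hik. apply IHf; [apply (win_le Hj); lia |].
      apply Hf; lia.
    + intros (k & Hk & Hin & Hg & HJ & Hf).
      rewrite <- win_iff_tin_tdrop in Hin by assumption.
      exists (m + k)%nat.
      rewrite IHg, wtime_sub_ftime by assumption.
      split; [lia |]. refine (conj Hin (conj Hg (conj HJ _))).
      intros i Hmi Hik. replace i with (m + (i - m))%nat by lia.
      apply IHf; [apply (win_le Hin); lia |]. apply Hf; lia.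
Qed.

Lemma mtl_sat0_iff_tesg_sat (phi : formula P) : win rho 0 ->
  mtl_sat rho phi 0 <-> tesg_sat w phi nil tau.
Proof.
  intros H0. rewrite mtl_sat_iff_tesg_sat by assumption. now rewrite tdrop0.
Qed.

End Simulation.

Definition word_of_trace (P : Type) (w : world P) (tau : trace) : tword P :=
  mkTword (option_map S (tlen tau))
    (fun i p => w p (ttake i tau) = true) (fun i => ftime (ttake i tau)).

Lemma word_of_trace_simulation (P : Type) (w : world P) (tau : trace) :
  simulation (word_of_trace w tau) w tau.
Proof. split; simpl; tauto. Qed.

Lemma valid_word_of_trace (P : Type) (w : world P) (tau : trace) :
  valid_trace tau -> valid_word (word_of_trace w tau).
Proof.
  intros [Hnn Hmon]. unfold valid_word, win; simpl.
  split; [destruct (tlen tau); simpl; auto; lia |]. split; [reflexivity |].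
  intros i [|j] Hij Hj; [replace i with 0%nat by lia; lra |].
  assert (Hj' : tin tau j) by (unfold tin; destruct (tlen tau); simpl in *; auto; lia).
  rewrite ftime_ttakeS.
  destruct i as [|i]; [now apply Hnn |].
  rewrite ftime_ttakeS. apply Hmon; [lia | assumption].
Qed.

(* Event i of the trace is the step from position i to i+1 of the word; its
   action name is irrelevant, so we take i. *)
Definition trace_of_word (P : Type) (rho : tword P) : trace :=
  mkTrace (option_map pred (wlen rho)) (fun i => (i, wtime rho (S i))).

Definition world_of_word (P : Type) (rho : tword P) : world P :=
  fun p z => if excluded_middle_informative (wlet rho (length z) p) then true else false.

Lemma trace_of_word_simulation (P : Type) (rho : tword P) : valid_word rho ->
  simulation rho (world_of_word rho) (trace_of_word rho).
Proof.
  intros [H0 [Ht0 _]]. split.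
  - unfold win in H0; simpl. destruct (wlen rho); simpl; auto. f_equal; lia.
  - intros i p _. unfold world_of_word, ttake. rewrite length_map, length_seq.
    destruct excluded_middle_informative; split; auto; discriminate.
  - intros [|i] _; [assumption |]. now rewrite ftime_ttakeS.
Qed.

Lemma valid_trace_of_word (P : Type) (rho : tword P) :
  valid_word rho -> valid_trace (trace_of_word rho).
Proof.
  intros [H0 [Ht0 Hmon]].
  assert (Hw : forall i, tin (trace_of_word rho) i -> win rho (S i)).
  { intros i; unfold tin, win; simpl. destruct (wlen rho); simpl; auto; lia. }
  split; intros i; simpl.
  - intros Hi. rewrite <- Ht0. apply Hmon; auto; lia.
  - intros j Hij Hj. apply Hmon; auto; lia.
Qed.

Theorem mainTheorem10 (P : Type) (phi : formula P) :
  mtl_valid phi <-> tesg_valid phi.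
Proof.
  split.
  - intros Hmtl w tau Htau.
    pose proof (valid_word_of_trace w Htau) as Hrho.
    rewrite <- (mtl_sat0_iff_tesg_sat (word_of_trace_simulation w tau)) by apply Hrho.
    now apply Hmtl.
  - intros Htesg rho Hrho.
    rewrite (mtl_sat0_iff_tesg_sat (trace_of_word_simulation Hrho)) by apply Hrho.
    apply Htesg, valid_trace_of_word, Hrho.
Qed.
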